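(* Let $(D,\mathfrak m,\Bbbk)$ be a $d$-dimensional local domain with fraction field $\mathbb F$ and let $\nu:\mathbb F^\times\to\mathbb Z^d$ be a valuation OK relative to $D$, with residue field $\Bbbk_V$ and $S=\nu(D\setminus0)$. Then there exists $\mathbf u\in S$ such that \[\nu(M\setminus0)+\mathbf u\subseteq\nu^{(h)}(M)\subseteq\nu(M\setminus0)\] for every $D$-submodule $M$ of $\mathbb F$ and every integer $1\le h\le[\Bbbk_V:\Bbbk]$.
   Context: Fix $\mathbf a\in\mathbb R^d$ with $\mathbb Q$-linearly independent coordinates; order $\mathbb Z^d$ by $\mathbf u\le\mathbf v$ iff $\langle\mathbf u,\mathbf a\rangle\le\langle\mathbf v,\mathbf a\rangle$. A valuation on $\mathbb F$ with value group $\mathbb Z^d$ is a surjective homomorphism $\nu:\mathbb F^\times\to\mathbb Z^d$ with $\nu(x+y)\ge\min\{\nu(x),\nu(y)\}$ whenever $x,y,x+y\ne0$; $\mathbb F_{\ge\mathbf u}=\{0\}\cup\{x:\nu(x)\ge\mathbf u\}$, $\mathbb F_{>\mathbf u}$ similarly; $V=\mathbb F_{\ge\mathbf0}$, maximal ideal $\mathfrak m_V$, residue field $\Bbbk_V$. $\nu$ is OK relative to $D$ if (i) $D\subseteq V$, $\mathfrak m=\mathfrak m_V\cap D$; (ii) $\langle\mathbf u,\mathbf a\rangle>0$ for all nonzero $\mathbf u$ in the closed convex cone generated by $\nu(D\setminus 0)$; (iii) $[\Bbbk_V:\Bbbk]<\infty$; (iv) some $\mathbf v\in\mathbb Z^d$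 has $D\cap\mathbb F_{\ge n\mathbf v}\subseteq\mathfrak m^n$ for all $n\ge0$. For a $D$-submodule $M\subseteq\mathbb F$ and $1\le h\le[\Bbbk_V:\Bbbk]$, $\nu^{(h)}(M)$ is the set of $\mathbf u\in\mathbb Z^d$ with $\dim_\Bbbk\big((M\cap\mathbb F_{\ge\mathbf u})/(M\cap\mathbb F_{>\mathbf u})\big)\ge h$. *)

From Stdlib Require Import Reals.
From HB Require Import structures.
From mathcomp Require Import all_boot all_order all_algebra.
Set Implicit Arguments. Unset Strict Implicit. Unset Printing Implicit Defensive.
Import GRing.Theory.
Local Open Scope ring_scope.

Definition int_to_R (z : int) : R :=
  match z with Posz n => INR n | Negz n => Ropp (INR n.+1) end.

Definition rat_to_R (q : rat) : R := Rdiv (int_to_R (numq q)) (int_to_R (denq q)).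

Definition Q_lin_indep (d : nat) (a : 'I_d -> R) : Prop :=
  forall q : 'I_d -> rat,
    \big[Rplus/R0]_(i < d) Rmult (rat_to_R (q i)) (a i) = R0 -> forall i, q i = 0.

Definition vdot (d : nat) (a : 'I_d -> R) (u : 'rV[int]_d) : R :=
  \big[Rplus/R0]_(i < d) Rmult (int_to_R (u ord0 i)) (a i).

Definition vle d a (u v : 'rV[int]_d) : Prop := Rle (vdot a u) (vdot a v).
Definition vlt d a (u v : 'rV[int]_d) : Prop := Rlt (vdot a u) (vdot a v).

(* nu : F^x -> Z^d (its value at 0 is irrelevant) is a surjective valuation *)
Definition is_valuation (F : fieldType) d (a : 'I_d -> R) (nu : F -> 'rV[int]_d) : Prop :=
  [/\ (forall x y : F, x != 0 -> y != 0 -> nu (x * y) = nu x + nu y),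
      (forall u : 'rV[int]_d, exists2 x : F, x != 0 & nu x = u) &
      (forall x y : F, x != 0 -> y != 0 -> x + y != 0 ->
          vle a (nu x) (nu (x + y)) \/ vle a (nu y) (nu (x + y)))].

Definition Fge (F : fieldType) d a (nu : F -> 'rV[int]_d) (u : 'rV[int]_d) (x : F) : Prop :=
  x = 0 \/ vle a u (nu x).
Definition Fgt (F : fieldType) d a (nu : F -> 'rV[int]_d) (u : 'rV[int]_d) (x : F) : Prop :=
  x = 0 \/ vlt a u (nu x).

Definition Vring (F : fieldType) d a (nu : F -> 'rV[int]_d) := Fge a nu 0.
Definition mV (F : fieldType) d a (nu : F -> 'rV[int]_d) := Fgt a nu 0.

Definition is_subring (F : fieldType) (D : F -> Prop) : Prop :=
  [/\ D 1, (forall x y, D x -> D y -> D (x - y)) & (forall x y, D x -> D y -> D (x * y))].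

Definition is_fraction_field (F : fieldType) (D : F -> Prop) : Prop :=
  forall x : F, exists a b : F, [/\ D a, D b, b != 0 & x = a / b].

Definition maxideal (F : fieldType) (D : F -> Prop) (x : F) : Prop :=
  D x /\ ~ (x != 0 /\ D x^-1).

Definition is_ideal (F : fieldType) (D : F -> Prop) (I : F -> Prop) : Prop :=
  [/\ (forall x, I x -> D x), I 0, (forall x y, I x -> I y -> I (x + y)) &
      (forall c x, D c -> I x -> I (c * x))].

Definition is_prime_ideal (F : fieldType) (D I : F -> Prop) : Prop :=
  [/\ is_ideal D I, ~ I 1 & (forall x y, D x -> D y -> I (x * y) -> I x \/ I y)].

Definition fin_generated (F : fieldType) (D I : F -> Prop) : Prop :=
  exists (n : nat) (g : 'I_n -> F), (forall j, I (g j)) /\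
    forall x, I x -> exists c : 'I_n -> F, (forall j, D (c j)) /\ x = \sum_(j < n) c j * g j.

Definition noetherian (F : fieldType) (D : F -> Prop) : Prop :=
  forall I, is_ideal D I -> fin_generated D I.

Definition is_local (F : fieldType) (D : F -> Prop) : Prop :=
  (forall x y, maxideal D x -> maxideal D y -> maxideal D (x + y)).

Definition prime_chain (F : fieldType) (D : F -> Prop) (n : nat) : Prop :=
  exists P : nat -> F -> Prop,
    (forall i, leq i n -> is_prime_ideal D (P i)) /\
    (forall i, leq i.+1 n -> (forall x, P i x -> P i.+1 x) /\ exists x, P i.+1 x /\ ~ P i x).

Definition krull_dim_eq (F : fieldType) (D : F -> Prop) (d : nat) : Prop :=
  prime_chain D d /\ ~ prime_chain D d.+1.

Definition ideal_pow (F : fieldType) (D I : F -> Prop) (n : nat) (x : F) : Prop :=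
  exists (k : nat) (c : 'I_k -> F) (y : 'I_k -> 'I_n -> F),
    [/\ (forall j, D (c j)), (forall j i, I (y j i)) &
        x = \sum_(j < k) c j * \prod_(i < n) y j i].

(* v_1..v_n in V have k-linearly independent images in k_V *)
Definition resfield_indep (F : fieldType) d a (nu : F -> 'rV[int]_d) (D : F -> Prop)
    (n : nat) (v : 'I_n -> F) : Prop :=
  (forall j, Vring a nu (v j)) /\
  forall c : 'I_n -> F, (forall j, D (c j)) ->
    mV a nu (\sum_(j < n) c j * v j) -> forall j, maxideal D (c j).

Definition resdeg_finite (F : fieldType) d a (nu : F -> 'rV[int]_d) (D : F -> Prop) : Prop :=
  exists N : nat, forall n (v : 'I_n -> F), resfield_indep a nu D v -> leq n N.

Definition resdeg_ge (F : fieldType) d a (nu : F -> 'rV[int]_d) (D : F -> Prop) (h : nat) : Prop :=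
  exists v : 'I_h -> F, resfield_indep a nu D v.

Definition in_cone (F : fieldType) d (nu : F -> 'rV[int]_d) (D : F -> Prop) (w : 'I_d -> R) : Prop :=
  exists (n : nat) (lam : 'I_n -> R) (xs : 'I_n -> F),
    [/\ (forall j, Rle R0 (lam j)), (forall j, D (xs j) /\ xs j != 0) &
        forall i, w i = \big[Rplus/R0]_(j < n) Rmult (lam j) (int_to_R (nu (xs j) ord0 i))].

Definition in_closed_cone (F : fieldType) d (nu : F -> 'rV[int]_d) (D : F -> Prop) (w : 'I_d -> R) : Prop :=
  forall eps : R, Rlt R0 eps ->
    exists c : 'I_d -> R, in_cone nu D c /\ forall i, Rlt (Rabs (Rminus (w i) (c i))) eps.

Definition OK_valuation (F : fieldType) d (a : 'I_d -> R) (nu : F -> 'rV[int]_d) (D : F -> Prop) : Prop :=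
  [/\ (forall x, D x -> Vring a nu x) /\
                (forall x, maxideal D x <-> (D x /\ mV a nu x)),
      (forall w : 'I_d -> R, in_closed_cone nu D w -> (exists i, w i <> R0) ->
                   Rlt R0 (\big[Rplus/R0]_(i < d) Rmult (w i) (a i))),
      resdeg_finite a nu D &
      exists v : 'rV[int]_d, forall (n : nat) (x : F),
                   D x -> Fge a nu (v *+ n) x -> ideal_pow D (maxideal D) n x].

Definition is_Dsubmodule (F : fieldType) (D M : F -> Prop) : Prop :=
  [/\ M 0, (forall x y, M x -> M y -> M (x + y)) & (forall c x, D c -> M x -> M (c * x))].

(* u \in nu^(h)(M): dim_k (M cap F_{>=u})/(M cap F_{>u}) >= h, i.e. there are h elements
   of M cap F_{>=u} whose classes are k-linearly independent *)
Definition nu_h (F : fieldType) d a (nu : F -> 'rV[int]_d) (D M : F -> Prop) (h : nat)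
    (u : 'rV[int]_d) : Prop :=
  exists x : 'I_h -> F, (forall j, M (x j) /\ Fge a nu u (x j)) /\
    forall c : 'I_h -> F, (forall j, D (c j)) ->
      Fgt a nu u (\sum_(j < h) c j * x j) -> forall j, maxideal D (c j).

(* Fix v_1, ..., v_n in V with k-linearly independent residues and n maximal
   (so n = [k_V : k]), and a common denominator b in D of the v_i; take
   u = nu b.  For x in M the elements b v_i x (i <= h) lie in
   M cap F_{>= nu x + u}, and a D-combination of them lying in F_{> nu x + u}
   is b x times a combination of the v_i lying in m_V, so its coefficients are
   in m.  Conversely, the first element of a witness family for w in
   nu^(h)(M) cannot lie in F_{> w}, as its coefficient 1 is a unit; so it has
   value exactly w. *)

From Stdlib Require Import Reals Lra Classical.
From HB Require Import structures.
From mathcomp Require Import all_boot all_order all_algebra.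
From mathcomp Require Import Rstruct ring.
Set Implicit Arguments. Unset Strict Implicit. Unset Printing Implicit Defensive.
Import GRing.Theory.
Local Open Scope ring_scope.

Lemma int_to_RE (z : int) : int_to_R z = z%:~R.
Proof. by case: z => n; rewrite /int_to_R INRE ?NegzE. Qed.

Section Pairing.

Variables (d : nat) (a : 'I_d -> R).

Lemma vdotE (u : 'rV[int]_d) : vdot a u = \sum_(i < d) (u ord0 i)%:~R * a i.
Proof. by apply: eq_bigr => i _; rewrite int_to_RE. Qed.

Lemma vdotD (u v : 'rV[int]_d) : vdot a (u + v) = Rplus (vdot a u) (vdot a v).
Proof.
rewrite RplusE !vdotE -big_split /=; apply: eq_bigr => i _.
by rewrite mxE intrD mulrDl.
Qed.

Lemma vdot0 : vdot a 0 = R0.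
Proof. by rewrite vdotE big1 // => i _; rewrite mxE mul0r. Qed.

Lemma vdot_inj : Q_lin_indep a -> injective (vdot a).
Proof.
move=> ha u v euv.
have vdot_uv0 : vdot a (u - v) = 0.
  by apply: (addIr (vdot a v)); rewrite add0r -RplusE -vdotD subrK euv.
have coord0 i : (u - v) ord0 i = 0.
  apply/eqP; rewrite -(intr_eq0 rat); apply/eqP.
  apply: (ha (fun i => ((u - v) ord0 i)%:Q)); rewrite -[RHS]vdot_uv0.
  by apply: eq_bigr => j _; rewrite /rat_to_R numq_int denq_int RdivE divr1.
by apply/eqP; rewrite -subr_eq0; apply/eqP/matrixP => i j; rewrite (ord1 i) coord0 mxE.
Qed.

End Pairing.

Section ValuedField.

Variables (F : fieldType) (d : nat) (a : 'I_d -> R) (nu : F -> 'rV[int]_d).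
Hypothesis nuM : forall x y : F, x != 0 -> y != 0 -> nu (x * y) = nu x + nu y.

Lemma Fge_nu (x : F) : Fge a nu (nu x) x.
Proof. by right; apply: Rle_refl. Qed.

Lemma Fge_mul (u v : 'rV[int]_d) (y z : F) :
  Fge a nu u y -> Fge a nu v z -> Fge a nu (u + v) (y * z).
Proof.
case: (eqVneq y 0) => [-> _ _|y0]; first by left; rewrite mul0r.
case: (eqVneq z 0) => [-> _ _|z0]; first by left; rewrite mulr0.
case=> [/eqP|uy]; first by rewrite (negbTE y0).
case=> [/eqP|vz]; first by rewrite (negbTE z0).
by right; move: uy vz; rewrite /vle nuM // !vdotD; lra.
Qed.

Lemma Fgt_mulKl (u : 'rV[int]_d) (y s : F) :
  y != 0 -> Fgt a nu (nu y + u) (y * s) -> Fgt a nu u s.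
Proof.
move=> y0; case: (eqVneq s 0) => [-> _|s0]; first by left.
case=> [/eqP|]; first by rewrite mulf_eq0 (negbTE y0) (negbTE s0).
by rewrite /vlt nuM // !vdotD => lt_us; right; rewrite /vlt; lra.
Qed.

Lemma Fge_notFgt_nu (u : 'rV[int]_d) (x : F) : Q_lin_indep a ->
  Fge a nu u x -> ~ Fgt a nu u x -> x != 0 /\ nu x = u.
Proof.
move=> ha [->|ge_ux] not_gt; first by case: not_gt; left.
have x0 : x != 0 by apply: contra_notN not_gt => /eqP ->; left.
split=> //; apply: (vdot_inj ha); apply: Rle_antisym => //.
by apply: Rnot_lt_le => lt_xu; apply: not_gt; right.
Qed.

End ValuedField.

Section Subring.

Variables (F : fieldType) (D : F -> Prop).
Hypothesis hD : is_subring D.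

Lemma subring0 : D 0.
Proof. by case: hD => D1 DB _; rewrite -(subrr 1); apply: DB. Qed.

Lemma subring_prod (I : finType) (B : I -> F) (P : pred I) :
  (forall i, D (B i)) -> D (\prod_(i | P i) B i).
Proof. by case: hD => D1 _ DM DB; apply: big_ind. Qed.

Lemma not_maxideal1 : ~ maxideal D 1.
Proof. by case=> _; apply; rewrite invr1 oner_neq0; case: hD. Qed.

Lemma common_denominator n (v : 'I_n -> F) : is_fraction_field D ->
  exists2 b, D b /\ b != 0 & forall i, D (b * v i).
Proof.
move=> hfrac; have den i : exists y, [/\ D y, y != 0 & D (y * v i)].
  have [x [y [Dx Dy y0 ->]]] := hfrac (v i).
  by exists y; rewrite mulrC divfK.
have [B hB] := fin_all_exists den.
exists (\prod_i B i); first split.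
- by apply: subring_prod => i; case: (hB i).
- by rewrite prodf_seq_neq0; apply/allP => i _; case: (hB i).
move=> i; rewrite (bigD1 i) //= mulrAC.
case: hD (hB i) => _ _ DM [_ _ DBv]; apply: DM DBv _.
by apply: subring_prod => j; case: (hB j).
Qed.

Variables (d : nat) (a : 'I_d -> R) (nu : F -> 'rV[int]_d).

Lemma resfield_indep_lshift h k (v : 'I_(h + k) -> F) :
  resfield_indep a nu D v -> resfield_indep a nu D (fun j => v (lshift k j)).
Proof.
case=> vV v_indep; split=> [j|c Dc sum_mV j]; first exact: vV.
pose c' (i : 'I_(h + k)) := if split i is inl j then c j else 0.
have c'l i : c' (lshift k i) = c i by rewrite /c' (unsplitK (inl _ i)).
have c'r i : c' (rshift h i) = 0 by rewrite /c' (unsplitK (inr _ i)).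
rewrite -c'l; apply: v_indep => [i|].
  by rewrite /c'; case: split => ?; [apply: Dc | apply: subring0].
rewrite big_split_ord /= [X in _ + X]big1 ?addr0 => [|i _]; last by rewrite c'r mul0r.
by under eq_bigr do rewrite c'l.
Qed.

Lemma resfield_indep_restrict n h (v : 'I_n -> F) : (h <= n)%N ->
  resfield_indep a nu D v ->
  exists2 w : 'I_h -> F, resfield_indep a nu D w & forall j, exists i, w j = v i.
Proof.
move=> /subnKC def_n; rewrite -{}def_n in v * => /resfield_indep_lshift v_indep.
by exists (fun j => v (lshift (n - h) j)) => // j; exists (lshift (n - h) j).
Qed.

End Subring.

Lemma bounded_ex_max (P : nat -> Prop) (N : nat) : P 0%N ->
  (forall n, P n -> (n <= N)%N) -> exists n, P n /\ forall m, P m -> (m <= n)%N.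
Proof.
move=> P0 bounded.
suff [n [Pn max_n]] : exists n, P n /\ forall m, P m -> (m <= N)%N -> (m <= n)%N.
  by exists n; split=> // m Pm; apply: max_n (bounded m Pm).
elim: N {bounded} => [|N [n [Pn max_n]]].
  by exists 0%N; split=> // m _; rewrite leqn0 => /eqP ->.
case: (classic (P N.+1)) => [PN1|notPN1]; first by exists N.+1.
exists n; split=> // m Pm; rewrite leq_eqVlt => /orP [/eqP eq_mN1|].
  by rewrite eq_mN1 in Pm.
by rewrite ltnS; apply: max_n.
Qed.

Lemma resdeg_ge0 (F : fieldType) d a (nu : F -> 'rV[int]_d) (D : F -> Prop) :
  resdeg_ge a nu D 0.
Proof. by exists (fun _ => 0); split => [[]|c _ _ []]. Qed.

Lemma resdeg_max (F : fieldType) d a (nu : F -> 'rV[int]_d) (D : F -> Prop) :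
  resdeg_finite a nu D -> exists n (v : 'I_n -> F),
    resfield_indep a nu D v /\ forall h, resdeg_ge a nu D h -> (h <= n)%N.
Proof.
case=> N hN; have bounded h : resdeg_ge a nu D h -> (h <= N)%N by case=> w; apply: hN.
have [n [[v v_indep] max_n]] := bounded_ex_max (resdeg_ge0 a nu D) bounded.
by exists n, v.
Qed.

Section Submodule.

Variables (F : fieldType) (D M : F -> Prop) (d : nat).
Variables (a : 'I_d -> R) (nu : F -> 'rV[int]_d).
Hypotheses (hD : is_subring D) (hM : is_Dsubmodule D M).
Hypothesis nuM : forall x y : F, x != 0 -> y != 0 -> nu (x * y) = nu x + nu y.

Lemma nu_h_translate h (w : 'I_h -> F) (b x : F) :
  resfield_indep a nu D w -> b != 0 -> (forall j, D (b * w j)) ->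
  M x -> x != 0 -> nu_h a nu D M h (nu x + nu b).
Proof.
case: hM => _ _ MD [wV w_indep] b0 Dbw Mx x0.
have xb0 : x * b != 0 by rewrite mulf_neq0.
exists (fun j => b * w j * x); split=> [j|c Dc].
  split; first exact: MD.
  rewrite -nuM // -[nu _]addr0 (_ : b * w j * x = x * b * w j); last by ring.
  by apply: (Fge_mul nuM); [apply: Fge_nu | apply: wV].
have -> : \sum_(j < h) c j * (b * w j * x) = x * b * \sum_(j < h) c j * w j.
  by rewrite big_distrr; apply: eq_bigr => j _ /=; ring.
by rewrite -nuM // -[nu _]addr0 => /(Fgt_mulKl nuM xb0); apply: w_indep.
Qed.

Lemma nu_h_witness h (u : 'rV[int]_d) : (0 < h)%N ->
  nu_h a nu D M h u -> exists x, [/\ M x, Fge a nu u x & ~ Fgt a nu u x].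
Proof.
move=> h0 [x [Mx x_indep]]; pose j0 := Ordinal h0.
have [Mxj0 ge_uxj0] := Mx j0; exists (x j0); split=> // gt_uxj0.
have Dc j : D (j == j0)%:R by case: (j == j0); [case: hD | apply: subring0].
apply: (not_maxideal1 hD); have := x_indep _ Dc _ j0; rewrite eqxx; apply.
by rewrite (bigD1 j0) //= mul1r big1 ?addr0 // => j /negbTE ->; rewrite mul0r.
Qed.

End Submodule.

Theorem mainTheorem11 (F : fieldType) (D : F -> Prop) (d : nat)
    (a : 'I_d -> R) (nu : F -> 'rV[int]_d)
    (hD : is_subring D) (hfrac : is_fraction_field D)
    (hloc : is_local D) (hnoeth : noetherian D) (hdim : krull_dim_eq D d)
    (ha : Q_lin_indep a) (hnu : is_valuation a nu) (hOK : OK_valuation a nu D) :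
  exists u : 'rV[int]_d,
    (exists2 y : F, D y /\ y != 0 & nu y = u) /\
    forall (M : F -> Prop), is_Dsubmodule D M ->
      forall h : nat, leq 1 h -> resdeg_ge a nu D h ->
        (forall x : F, M x -> x != 0 -> nu_h a nu D M h (nu x + u)) /\
        (forall w : 'rV[int]_d, nu_h a nu D M h w ->
           exists2 x : F, M x /\ x != 0 & nu x = w).
Proof.
case: hOK hnu => _ _ resdeg_fin _ [nuM _ _].
have [n [v [v_indep max_n]]] := resdeg_max resdeg_fin.
have [b [Db b0] Dbv] := common_denominator hD v hfrac.
exists (nu b); split; first by exists b.
move=> M hM h h0 /max_n le_hn; split.
  have [w w_indep w_v] := resfield_indep_restrict hD le_hn v_indep.
  move=> x; apply: (nu_h_translate hM nuM w_indep b0) => j.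
  by have [i ->] := w_v j.
move=> u /(nu_h_witness hD h0) [x [Mx ge_ux not_gt]].
by have [x0 nux] := Fge_notFgt_nu ha ge_ux not_gt; exists x.
Qed.
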